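(* Let $L\subseteq\bigwedge^{k}V$ be a subspace such that $e_{1}\wedge e_{2}\wedge x=0$ for all $x\in L$. Then for every $3\leq i<j\leq n$, also $e_{1}\wedge e_{2}\wedge y=0$ for all $y\in N_{j\to i}L$.
   Context: $\mathbb{F}$ is a field (assumed throughout the paper, for expository purposes, to have characteristic not $2$), $V$ is an $n$-dimensional $\mathbb{F}$-vector space with a fixed basis $e_1,\dots,e_n$, and $\bigwedge V$ its exterior algebra. For $j\in[n]$, $V^{(j)}$ is the span of $\{e_h:h\neq j\}$. Slow shift: for distinct $i,j\in[n]$ and nonzero $m\in\bigwedge^kV$, write uniquely $m=x+e_j\wedge y$ with $x\in\bigwedge^kV^{(j)}$, $y\in\bigwedge^{k-1}V^{(j)}$, and set $N_{j\to i}m=x+e_i\wedge y$ if this is nonzero, and $N_{j\to i}m=e_j\wedge y$ otherwise (the limit as $t\to0$ of the projective action of the linear map $e_j\mapsto e_i+te_j$ fixing the other $e_h$). For a subspace $L$ of $\bigwedge^kV$, $N_{j\to i}L$ is the span of $\{N_{j\to i}m:m\in L\setminus\{0\}\}$. *)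

(* Exterior algebra of V = F^n with basis e_0,...,e_(n-1)
   (paper's e_1,...,e_n), built concretely: an element of /\V is its
   coordinate function on the standard basis e_S (S a subset of 'I_n,
   e_S = wedge of e_s, s in S, in increasing order). *)
From HB Require Import structures.
From mathcomp Require Import all_boot all_order all_algebra.
Set Implicit Arguments. Unset Strict Implicit. Unset Printing Implicit Defensive.
Import Order.TTheory GRing.Theory.
Local Open Scope ring_scope.

Section Ext.
Variables (F : fieldType) (n : nat).

Definition ext := {ffun {set 'I_n} -> F^o}.

(* sign of e_A /\ e_B = sign * e_(A u B) for disjoint A, B:
   (-1)^(number of inversions (a,b), a in A, b in B, b < a) *)
Definition ext_sign (A B : {set 'I_n}) : F :=
  (-1) ^+ #|[set p : 'I_n * 'I_n | [&& p.1 \in A, p.2 \in B & (p.2 < p.1)%N]]|.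

Definition eS (S : {set 'I_n}) : ext := [ffun T : {set 'I_n} => if T == S then 1 else 0].

Definition evec (i : 'I_n) : ext := eS [set i].

Definition blade (A B : {set 'I_n}) : ext :=
  if [disjoint A & B] then ext_sign A B *: eS (A :|: B) else 0.

Definition wedge (x y : ext) : ext :=
  \sum_(A : {set 'I_n}) \sum_(B : {set 'I_n}) (x A * y B) *: blade A B.

Definition homog (k : nat) (m : ext) : Prop :=
  forall S : {set 'I_n}, #|S| != k -> m S = 0.

(* The unique decomposition m = x + e_j /\ y with x, y in /\ V^(j):
   x = part of m on basis elements not involving e_j;
   y = coefficients with e_j /\ e_S = ext_sign [set j] S e_(j u S),
   i.e. y_S = ext_sign [set j] S * m_(j u S) for j notin S
   (ext_sign is +-1, hence its own inverse). *)
Definition split_x (j : 'I_n) (m : ext) : ext :=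
  [ffun S : {set 'I_n} => if j \in S then 0 else m S].
Definition split_y (j : 'I_n) (m : ext) : ext :=
  [ffun S : {set 'I_n} => if j \in S then 0 else ext_sign [set j] S * m (j |: S)].

Definition slow_shift (j i : 'I_n) (m : ext) : ext :=
  let v := split_x j m + wedge (evec i) (split_y j m) in
  if v != 0 then v else wedge (evec j) (split_y j m).

Definition in_slow_shift_span (j i : 'I_n) (L : {vspace ext}) (y : ext) : Prop :=
  exists s : seq ext, all (fun m => (m \in L) && (m != 0)) s /\
                      y \in <<map (slow_shift j i) s>>%VS.

End Ext.

Arguments ext_sign {F n}.
Arguments eS {F n}.
Arguments evec {F n}.
Arguments blade {F n}.
Arguments wedge {F n}.
Arguments homog {F n}.
Arguments split_x {F n}.
Arguments split_y {F n}.
Arguments slow_shift {F n}.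
Arguments in_slow_shift_span {F n}.

(* The condition [e_a /\ e_b /\ x = 0] says exactly that x lies in the ideal
   of /\V generated by e_a and e_b, i.e. every basis element e_B in the
   support of x has B meeting {a, b}.  Membership in this ideal is a linear
   condition, is stable under left multiplication, and is inherited by both
   halves x, y of the decomposition m = x + e_j /\ y as soon as j is not in
   {a, b}.  Hence it is preserved by N_{j -> i} and by taking spans. *)
From HB Require Import structures.
From mathcomp Require Import all_boot all_order all_algebra.
Set Implicit Arguments. Unset Strict Implicit. Unset Printing Implicit Defensive.
Import GRing.Theory.
Local Open Scope ring_scope.

Section IdealOfBasisVectors.
Variables (F : fieldType) (n : nat).
Implicit Types (x y z m : ext F n) (S B T : {set 'I_n}) (c j i : 'I_n).

Definition in_ideal S y := forall B, [disjoint S & B] -> y B = 0.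

Lemma bladeE (A B T : {set 'I_n}) : blade A B T =
  (if [disjoint A & B] && (T == A :|: B) then ext_sign A B else 0 : F).
Proof.
rewrite /blade; case: ifP => _ /=; last by rewrite ffunE.
by rewrite !ffunE; case: eqP => _; [apply: mulr1 | apply: mulr0].
Qed.

Lemma wedgeE x y T :
  wedge x y T = \sum_A \sum_B x A * y B * blade A B T.
Proof.
rewrite /wedge sum_ffunE; apply: eq_bigr => A _.
by rewrite sum_ffunE; apply: eq_bigr => B _; rewrite ffunE.
Qed.

Lemma wedge_evecE c z T : wedge (evec c) z T =
  if c \in T then ext_sign [set c] (T :\ c) * z (T :\ c) else 0.
Proof.
rewrite wedgeE (bigD1 [set c]) //= [X in _ + X]big1 => [|A /negbTE cA]; last first.
  by apply: big1 => B _; rewrite ffunE cA !mul0r.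
rewrite addr0; under eq_bigr => B _ do rewrite ffunE eqxx mul1r.
have blade_c B : blade [set c] B T = (if (c \notin B) && (T == c |: B)
                                       then ext_sign [set c] B else 0 : F).
  by rewrite bladeE disjoints1.
case: ifP => cT.
  rewrite (bigD1 (T :\ c)) //= big1 => [|B neqB]; last first.
    rewrite blade_c; case: andP => [[cB /eqP eT]|]; last by rewrite mulr0.
    by case/eqP: neqB; rewrite eT setU1K.
  by rewrite blade_c setD11 setD1K // eqxx addr0 /= mulrC.
rewrite big1 // => B _; rewrite blade_c.
case: andP => [[_ /eqP eT]|]; last by rewrite mulr0.
by rewrite eT setU11 in cT.
Qed.

Lemma disjointsU1 c S B : [disjoint c |: S & B] = (c \notin B) && [disjoint S & B].
Proof. by rewrite -disjointU1; apply: eq_disjoint => x; rewrite !inE. Qed.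

Lemma in_ideal0 y : in_ideal set0 y <-> y = 0.
Proof.
split=> [y0 | -> B _]; last by rewrite ffunE.
by apply/ffunP => B; rewrite ffunE y0 // disjoints_subset sub0set.
Qed.

Lemma in_idealD S y z : in_ideal S y -> in_ideal S z -> in_ideal S (y + z).
Proof. by move=> yS zS B SB; rewrite ffunE yS ?zS ?addr0. Qed.

(* The ideal is a left ideal: e_A /\ e_B only involves sets containing B. *)
Lemma in_ideal_wedge S x y : in_ideal S y -> in_ideal S (wedge x y).
Proof.
move=> yS T ST; rewrite wedgeE; apply: big1 => A _; apply: big1 => B _.
rewrite bladeE; case: andP => [[_ /eqP eT]|]; last by rewrite mulr0.
by rewrite yS ?mulr0 ?mul0r // (disjointWr _ ST) // eT subsetUr.
Qed.

Lemma in_ideal_span S (X : seq (ext F n)) y :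
  {in X, forall x, in_ideal S x} -> y \in <<X>>%VS -> in_ideal S y.
Proof.
move=> XS yX B SB; rewrite (coord_span (X := in_tuple X) yX) sum_ffunE big1 // => t _.
by rewrite ffunE (XS X`_t (mem_nth 0 (ltn_ord t))) // scaler0.
Qed.

Lemma in_ideal_wedge_evec c S y : c \notin S ->
  in_ideal S (wedge (evec c) y) <-> in_ideal (c |: S) y.
Proof.
move=> cS; split=> yS B.
  rewrite disjointsU1 => /andP[cB SB].
  have SB' : [disjoint S & c |: B] by rewrite disjoint_sym disjointsU1 cS disjoint_sym.
  have /eqP := yS _ SB'.
  by rewrite wedge_evecE setU11 setU1K // mulf_eq0 signr_eq0 => /eqP.
move=> SB; rewrite wedge_evecE; case: ifP => // cB; rewrite yS ?mulr0 //.
by rewrite disjointsU1 setD11 (disjointWr (subD1set _ _) SB).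
Qed.

Lemma wedge_evec_eq0 c z : wedge (evec c) z = 0 <-> in_ideal [set c] z.
Proof.
rewrite -(setU0 [set c]).
exact: iff_trans (iff_sym (in_ideal0 _)) (in_ideal_wedge_evec _ (negbT (in_set0 c))).
Qed.

Lemma in_ideal_split_x S j m : in_ideal S m -> in_ideal S (split_x j m).
Proof. by move=> mS B SB; rewrite ffunE mS ?if_same. Qed.

Lemma in_ideal_split_y S j m : j \notin S -> in_ideal S m -> in_ideal S (split_y j m).
Proof.
move=> jS mS B SB; rewrite ffunE mS ?mulr0 ?if_same //.
by rewrite disjoint_sym disjointsU1 jS disjoint_sym.
Qed.

Lemma in_ideal_slow_shift S j i m :
  j \notin S -> in_ideal S m -> in_ideal S (slow_shift j i m).
Proof.
move=> jS mS; have yS := in_ideal_split_y jS mS.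
rewrite /slow_shift; case: ifP => _; last exact: in_ideal_wedge.
by apply: in_idealD; [apply: in_ideal_split_x | apply: in_ideal_wedge].
Qed.

End IdealOfBasisVectors.

Theorem lemma5p2 (F : fieldType) (n k : nat) (a b : 'I_n)
    (ha : nat_of_ord a = 0%N) (hb : nat_of_ord b = 1%N)
    (hchar : 2%N \notin [pchar F])
    (L : {vspace ext F n})
    (hL : forall x, x \in L -> homog k x)
    (hL12 : forall x, x \in L -> wedge (evec a) (wedge (evec b) x) = 0)
    (i j : 'I_n) (hi : (2 <= i)%N) (hij : (i < j)%N) :
  forall y : ext F n, in_slow_shift_span j i L y ->
    wedge (evec a) (wedge (evec b) y) = 0.
Proof.
move=> y [s [sL y_span]].
have b_a : b \notin [set a] by rewrite inE -val_eqE /= ha hb.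
have j_ab : j \notin [set b; a].
  have j_gt2 : (2 < j)%N := leq_ltn_trans hi hij.
  by rewrite !inE -!val_eqE /= ha hb !gtn_eqF // (ltn_trans _ j_gt2).
apply/wedge_evec_eq0/(in_ideal_wedge_evec _ b_a).
apply: in_ideal_span y_span => _ /mapP[m ms ->].
apply: in_ideal_slow_shift j_ab _.
apply/(in_ideal_wedge_evec _ b_a)/wedge_evec_eq0.
by have /andP[mL _] := allP sL m ms; apply: hL12.
Qed.
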